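(* Let $\mathcal{C}$ be a category, let $\mathcal{M}$ be a class of morphisms of $\mathcal{C}$, and let $T$ be an object of $\mathcal{C}$. Let $\mathcal{M}/T$ be the category whose objects are pairs $(S,s)$ with $s : S \to T$ in $\mathcal{M}$ and whose morphisms $f:(S,s)\to(S',s')$ are morphisms $f:S\to S'$ of $\mathcal{C}$ with $s'\circ f = s$. Define $T_{\mathcal{M}} : \mathcal{M}/T \to \mathcal{C}$ by $T_{\mathcal{M}}(S,s) = S$, $T_{\mathcal{M}}f = f$, and $\tau_{(S,s)} = s$. Then $(\mathcal{M}/T, T_{\mathcal{M}}, \tau)$ is an $\mathcal{M}$-grading of $T$, and it is a pseudoterminal object of the 2-category $\mathrm{Grade}_{\mathcal{M}}(T)$. Explicitly, for every $\mathcal{M}$-grading $(\mathcal{G},G,g)$ of $T$: (i) there exists a morphism of $\mathcal{M}$-gradings $(F,f) : (\mathcal{G},G,g) \to (\mathcal{M}/T, T_{\mathcal{M}}, \tau)$; and (ii) this morphism is essentially unique, in the sense that there is an assignment, natural in $(F',f')$, of an invertible 2-cell $(F',f') \cong (F,f)$ to every morphism of $\mathcal{M}$-gradings $(F',f') : (\mathcal{G},G,g) \to (\mathcal{M}/T, T_{\mathcal{M}}, \tau)$.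
   Context: An $\mathcal{M}$-grading $(\mathcal{G},G,g)$ of an object $T$ of $\mathcal{C}$ consists of a category $\mathcal{G}$, a functor $G:\mathcal{G}\to\mathcal{C}$, and a natural transformation with components $g_d : Gd \to T$ (i.e. a cocone from $G$ to $T$) all of which lie in $\mathcal{M}$. A morphism $(F,f):(\mathcal{G},G,g)\to(\mathcal{G}',G',g')$ is a functor $F:\mathcal{G}\to\mathcal{G}'$ together with a natural isomorphism $f : G'\cdot F \cong G$ such that $g_d\circ f_d = g'_{Fd}$ for all $d$. A 2-cell $\beta:(F,f)\Rightarrow(F',f')$ is a natural transformation $\beta:F\Rightarrow F'$ with $f'\circ(G'\cdot\beta) = f$. These data form the 2-category $\mathrm{Grade}_{\mathcal{M}}(T)$. *)

From Stdlib Require Import ProofIrrelevance.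

Record Category := {
  Obj : Type;
  Hom : Obj -> Obj -> Type;
  cid : forall a, Hom a a;
  ccomp : forall a b c, Hom b c -> Hom a b -> Hom a c;
  comp_assoc : forall a b c d (h : Hom c d) (g : Hom b c) (f : Hom a b),
      ccomp a c d h (ccomp a b c g f) = ccomp a b d (ccomp b c d h g) f;
  comp_id_l : forall a b (f : Hom a b), ccomp a b b (cid b) f = f;
  comp_id_r : forall a b (f : Hom a b), ccomp a a b f (cid a) = f
}.
Arguments Hom {c} a b : rename.
Arguments cid {c} a : rename.
Arguments ccomp {c a b c0} _ _ : rename.

Record Functor (C D : Category) := {
  fobj : Obj C -> Obj D;
  fmap : forall a b, Hom a b -> Hom (fobj a) (fobj b);
  fmap_id : forall a, fmap a a (cid a) = cid (fobj a);
  fmap_comp : forall a b c (g : Hom b c) (f : Hom a b),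
      fmap a c (ccomp g f) = ccomp (fmap b c g) (fmap a b f)
}.
Arguments fobj {C D} f a : rename.
Arguments fmap {C D} f {a b} u : rename.

Definition MorClass (C : Category) := forall a b : Obj C, @Hom C a b -> Prop.

Section Slice.
Variables (C : Category) (M : MorClass C) (T : Obj C).

Record SliceObj := {
  sl_dom : Obj C;
  sl_map : Hom sl_dom T;
  sl_inM : M _ _ sl_map
}.

Record SliceHom (x y : SliceObj) := {
  sh_map : Hom (sl_dom x) (sl_dom y);
  sh_comm : ccomp (sl_map y) sh_map = sl_map x
}.
Arguments sh_map {x y} _.

Lemma SliceHom_eq x y (f g : SliceHom x y) : sh_map f = sh_map g -> f = g.
Proof.
  destruct f as [f hf], g as [g hg]; simpl; intros ->.
  f_equal; apply proof_irrelevance.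
Qed.

Definition slice_id (x : SliceObj) : SliceHom x x.
Proof. refine {| sh_map := cid (sl_dom x) |}. apply comp_id_r. Defined.

Definition slice_comp (x y z : SliceObj) (g : SliceHom y z) (f : SliceHom x y)
  : SliceHom x z.
Proof.
  refine {| sh_map := ccomp (sh_map g) (sh_map f) |}.
  rewrite comp_assoc, (sh_comm _ _ g), (sh_comm _ _ f). reflexivity.
Defined.

Definition slice_cat : Category.
Proof.
  refine {| Obj := SliceObj; Hom := SliceHom; cid := slice_id;
            ccomp := slice_comp |}.
  - intros; apply SliceHom_eq; simpl; apply comp_assoc.
  - intros; apply SliceHom_eq; simpl; apply comp_id_l.
  - intros; apply SliceHom_eq; simpl; apply comp_id_r.
Defined.

Definition slice_forget : Functor slice_cat C.
Proof.
  refine {| fobj := (sl_dom : Obj slice_cat -> Obj C);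
            fmap := fun x y (f : @Hom slice_cat x y) => sh_map f |}.
  - reflexivity.
  - reflexivity.
Defined.

End Slice.

Record GradingData (C : Category) (T : Obj C) := {
  gr_cat : Category;
  gr_fun : Functor gr_cat C;
  gr_cocone : forall d : Obj gr_cat, Hom (fobj gr_fun d) T
}.
Arguments gr_cat {C T} _.
Arguments gr_fun {C T} _.
Arguments gr_cocone {C T} _ d.

(* (G,G,g) is an M-grading: g is a cocone (natural transformation G => T)
   all of whose components lie in M. *)
Definition is_grading {C : Category} (M : MorClass C) {T : Obj C}
    (Gr : GradingData C T) : Prop :=
  (forall d, M _ _ (gr_cocone Gr d)) /\
  (forall d d' (u : Hom d d'),
      ccomp (gr_cocone Gr d') (fmap (gr_fun Gr) u) = gr_cocone Gr d).

Definition slice_grading {C : Category} (M : MorClass C) (T : Obj C)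
  : GradingData C T :=
  {| gr_cat := slice_cat C M T;
     gr_fun := slice_forget C M T;
     gr_cocone := fun x => sl_map C M T x |}.

(* Morphism (F,f) : (G,G,g) -> (G',G',g'):  F : G -> G' and a natural
   isomorphism f : G' . F ~= G with g_d o f_d = g'_{F d}. *)
Record GradingMor {C : Category} {T : Obj C} (Gr Gr' : GradingData C T) := {
  gm_fun : Functor (gr_cat Gr) (gr_cat Gr');
  gm_iso : forall d, Hom (fobj (gr_fun Gr') (fobj gm_fun d)) (fobj (gr_fun Gr) d);
  gm_nat : forall d d' (u : Hom d d'),
      ccomp (fmap (gr_fun Gr) u) (gm_iso d)
      = ccomp (gm_iso d') (fmap (gr_fun Gr') (fmap gm_fun u));
  gm_invertible : forall d, exists h : Hom (fobj (gr_fun Gr) d)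
                                          (fobj (gr_fun Gr') (fobj gm_fun d)),
      ccomp h (gm_iso d) = cid _ /\ ccomp (gm_iso d) h = cid _;
  gm_tri : forall d, ccomp (gr_cocone Gr d) (gm_iso d) = gr_cocone Gr' (fobj gm_fun d)
}.
Arguments gm_fun {C T Gr Gr'} _.
Arguments gm_iso {C T Gr Gr'} _ d.

Record TwoCell {C : Category} {T : Obj C} {Gr Gr' : GradingData C T}
    (m m' : GradingMor Gr Gr') := {
  tc_comp : forall d, Hom (fobj (gm_fun m) d) (fobj (gm_fun m') d);
  tc_nat : forall d d' (u : Hom d d'),
      ccomp (fmap (gm_fun m') u) (tc_comp d) = ccomp (tc_comp d') (fmap (gm_fun m) u);
  tc_tri : forall d,
      ccomp (gm_iso m' d) (fmap (gr_fun Gr') (tc_comp d)) = gm_iso m d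
}.
Arguments tc_comp {C T Gr Gr' m m'} _ d.

(* beta is invertible in the hom-category: there is a 2-cell gamma the other
   way with gamma . beta = id and beta . gamma = id (vertical composition,
   computed componentwise). *)
Definition invertible_2cell {C : Category} {T : Obj C} {Gr Gr' : GradingData C T}
    {m m' : GradingMor Gr Gr'} (beta : TwoCell m m') : Prop :=
  exists gamma : TwoCell m' m,
    forall d, ccomp (tc_comp gamma d) (tc_comp beta d) = cid _ /\
              ccomp (tc_comp beta d) (tc_comp gamma d) = cid _.

(* A grading (G, G, g) of T is the same thing as a functor into M/T:
   g_d lies in M, so (G d, g_d) is an object of M/T, and the cocone equation
   says exactly that G u is a slice morphism.  This functor, with the identity
   comparison isomorphism, is the required morphism (F, f).  For any other
   morphism (F', f'), the triangle condition g_d o f'_d = s_{F' d} says that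
   f'_d : F' d -> F d is a slice morphism, naturality of f' makes these a
   2-cell, and they are invertible because f' is.  Naturality in (F', f') is
   the defining equation of a 2-cell. *)
From Stdlib Require Import ClassicalEpsilon.

Lemma comm_square_inverse (K : Category) (a a' b b' : Obj K)
    (f : Hom a b) (h : Hom b a) (f' : Hom a' b') (h' : Hom b' a')
    (x : Hom a a') (y : Hom b b') :
  ccomp h' f' = cid a' -> ccomp f h = cid b ->
  ccomp y f = ccomp f' x -> ccomp x h = ccomp h' y.
Proof.
  intros h'f' fh sq.
  transitivity (ccomp (ccomp h' (ccomp f' x)) h).
  - rewrite (comp_assoc _ _ _ _ _ h' f' x), h'f', comp_id_l. reflexivity.
  - rewrite <- sq, <- !comp_assoc, fh, comp_id_r. reflexivity.
Qed.

Section GradingMorInverse.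
Variables (C : Category) (T : Obj C) (Gr Gr' : GradingData C T).
Variable m : GradingMor Gr Gr'.

(* The inverse of f_d is only asserted to exist (in Prop); to assemble the
   inverses into a 2-cell we pick one for each d. *)
Definition gm_inv (d : Obj (gr_cat Gr)) :
    Hom (fobj (gr_fun Gr) d) (fobj (gr_fun Gr') (fobj (gm_fun m) d)) :=
  proj1_sig (constructive_indefinite_description _ (gm_invertible _ _ m d)).

Lemma gm_invK d :
  ccomp (gm_inv d) (gm_iso m d) = cid (fobj (gr_fun Gr') (fobj (gm_fun m) d)).
Proof.
  exact (proj1 (proj2_sig
    (constructive_indefinite_description _ (gm_invertible _ _ m d)))).
Qed.

Lemma gm_isoK d : ccomp (gm_iso m d) (gm_inv d) = cid (fobj (gr_fun Gr) d).
Proof.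
  exact (proj2 (proj2_sig
    (constructive_indefinite_description _ (gm_invertible _ _ m d)))).
Qed.

End GradingMorInverse.

Section SliceGrading.
Variables (C : Category) (M : MorClass C) (T : Obj C).

Lemma slice_grading_is_grading : is_grading M (slice_grading M T).
Proof.
  split.
  - exact (sl_inM C M T).
  - exact (sh_comm C M T).
Qed.

Definition slice_hom_of_section (x y : SliceObj C M T) (f : SliceHom C M T x y)
    (h : Hom (sl_dom C M T y) (sl_dom C M T x))
    (fh : ccomp (sh_map C M T x y f) h = cid _) : SliceHom C M T y x.
Proof.
  refine (Build_SliceHom C M T y x h _).
  rewrite <- (sh_comm C M T x y f), <- comp_assoc, fh. apply comp_id_r.
Defined.

Variables (Gr : GradingData C T) (HG : is_grading M Gr).

Definition classifying_obj (d : Obj (gr_cat Gr)) : SliceObj C M T :=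
  {| sl_dom := fobj (gr_fun Gr) d; sl_map := gr_cocone Gr d;
     sl_inM := proj1 HG d |}.

Definition classifying_hom d d' (u : Hom d d') :
    SliceHom C M T (classifying_obj d) (classifying_obj d') :=
  Build_SliceHom C M T (classifying_obj d) (classifying_obj d')
    (fmap (gr_fun Gr) u) (proj2 HG d d' u).

Definition classifying_functor : Functor (gr_cat Gr) (slice_cat C M T).
Proof.
  refine {| fobj := (classifying_obj : _ -> Obj (slice_cat C M T));
            fmap := classifying_hom |}.
  - intros a; apply SliceHom_eq; apply fmap_id.
  - intros a b c g f; apply SliceHom_eq; apply fmap_comp.
Defined.

Definition classifying_mor : GradingMor Gr (slice_grading M T).
Proof.
  refine (Build_GradingMor C T Gr (slice_grading M T) classifying_functor
            (fun d => cid (fobj (gr_fun Gr) d)) _ _ _).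
  - intros d d' u; simpl. rewrite comp_id_r, comp_id_l. reflexivity.
  - intros d; exists (cid _); split; apply comp_id_l.
  - intros d; apply comp_id_r.
Defined.

Section Comparison.
Variable Ff : GradingMor Gr (slice_grading M T).

Definition comparison_hom d :
    SliceHom C M T (fobj (gm_fun Ff) d) (classifying_obj d) :=
  Build_SliceHom C M T (fobj (gm_fun Ff) d) (classifying_obj d)
    (gm_iso Ff d) (gm_tri _ _ Ff d).

Definition comparison_2cell : TwoCell Ff classifying_mor.
Proof.
  refine (Build_TwoCell C T Gr (slice_grading M T) Ff classifying_mor
            comparison_hom _ _).
  - intros d d' u. apply SliceHom_eq. exact (gm_nat _ _ Ff d d' u).
  - intros d. apply comp_id_l.
Defined.

Definition comparison_inv_hom d :
    SliceHom C M T (classifying_obj d) (fobj (gm_fun Ff) d) :=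
  slice_hom_of_section _ _ (comparison_hom d) (gm_inv _ _ _ _ Ff d)
    (gm_isoK _ _ _ _ Ff d).

Definition comparison_inv_2cell : TwoCell classifying_mor Ff.
Proof.
  refine (Build_TwoCell C T Gr (slice_grading M T) classifying_mor Ff
            comparison_inv_hom _ _).
  - intros d d' u. apply SliceHom_eq.
    exact (comm_square_inverse _ _ _ _ _ _ _ _ _ _ _ (gm_invK _ _ _ _ Ff d')
             (gm_isoK _ _ _ _ Ff d) (gm_nat _ _ Ff d d' u)).
  - intros d. exact (gm_isoK _ _ _ _ Ff d).
Defined.

Lemma comparison_2cell_invertible : invertible_2cell comparison_2cell.
Proof.
  exists comparison_inv_2cell; intros d.
  split; apply SliceHom_eq; [exact (gm_invK _ _ _ _ Ff d) | exact (gm_isoK _ _ _ _ Ff d)].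
Qed.

End Comparison.

Lemma comparison_2cell_natural (Ff Ff' : GradingMor Gr (slice_grading M T))
    (beta : TwoCell Ff Ff') d :
  ccomp (tc_comp (comparison_2cell Ff') d) (tc_comp beta d)
  = tc_comp (comparison_2cell Ff) d.
Proof. apply SliceHom_eq. exact (tc_tri _ _ beta d). Qed.

End SliceGrading.

Theorem theorem2p3 (C : Category) (M : MorClass C) (T : Obj C) :
  is_grading M (slice_grading M T) /\
  forall Gr : GradingData C T, is_grading M Gr ->
    exists Ff : GradingMor Gr (slice_grading M T),
    exists theta : forall Ff' : GradingMor Gr (slice_grading M T), TwoCell Ff' Ff,
      (forall Ff', invertible_2cell (theta Ff')) /\
      (forall (Ff' Ff'' : GradingMor Gr (slice_grading M T))
              (beta : TwoCell Ff' Ff'') d,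
          ccomp (tc_comp (theta Ff'') d) (tc_comp beta d) = tc_comp (theta Ff') d).
Proof.
  split; [exact (slice_grading_is_grading C M T) |].
  intros Gr HG.
  exists (classifying_mor C M T Gr HG), (comparison_2cell C M T Gr HG).
  split.
  - exact (comparison_2cell_invertible C M T Gr HG).
  - exact (comparison_2cell_natural C M T Gr HG).
Qed.
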